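(* There exists a logically minimal, non-trivial linear inference $\phi\to\psi$ that preserves neither $\land$-lccs nor $\lor$-lccs.
   Context: Fix a countably infinite set of variables. Linear formulae on a finite set $\mathcal{V}$ of variables are defined inductively: - $\top,\bot$ are linear formulae on $\emptyset$. - $x,\neg x$ are linear formulae on $\{x\}$. - If $\phi$ is on $\mathcal{V}_1$, $\psi$ is on $\mathcal{V}_2$ and $\mathcal{V}_1\cap\mathcal{V}_2=\emptyset$, then $\phi\lor\psi$ and $\phi\land\psi$ are on $\mathcal{V}_1\cup\mathcal{V}_2$. Formulae are evaluated under Boolean assignments; two formulae are logically equivalent if they are satisfied by the same assignments. A linear inference $\phi\to\psi$ is a pair of linear formulae such that every assignment satisfying $\phi$ satisfies $\psi$. An inference $\phi\to\psi$ is trivial at a variable $x$ if $\phi[\top/x]\to\psi[\bot/x]$ is valid; it is trivial if trivial at some variable, non-trivial otherwise. A linear inference $\phi\to\psi$ is logically minimal if for every linear formula $\chi$ such that $\phi\to\chi$ and $\chi\to\psi$ are both linear inferences, $\chi$ is logically equivalent to $\phi$ or to $\psi$. For a linear formula $\phi$ and distinct variables $x,y$ occurring in it, the least common connective (lcc) of $x$ and $y$ in $\phi$ is the connective ($\lor$ or $\land$) at the root of the smallest subformula of $\phi$ containing both $x$ and $y$. An inference $\phi\to\psi$ preserves $\land$-lccs if, for all distinct variables $x,y$, whenever the lcc of $x,y$ in $\phi$ is $\land$, the lcc of $x,y$ in $\psi$ is also $\land$. It preserves $\lor$-lccs if, whenever the lcc of $x,y$ in $\phi$ is $\lor$, the lcc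 of $x,y$ in $\psi$ is also $\lor$. *)

From Stdlib Require Import List Arith Bool.
Import ListNotations.

Definition var := nat.

Inductive formula : Type :=
| FTop : formula
| FBot : formula
| FVar : var -> formula
| FNeg : var -> formula
| FOr  : formula -> formula -> formula
| FAnd : formula -> formula -> formula.

Fixpoint vars (f : formula) : list var :=
  match f with
  | FTop | FBot => []
  | FVar x | FNeg x => [x]
  | FOr a b | FAnd a b => vars a ++ vars b
  end.

Fixpoint linear (f : formula) : Prop :=
  match f with
  | FTop | FBot | FVar _ | FNeg _ => True
  | FOr a b | FAnd a b =>
      linear a /\ linear b /\ (forall x, In x (vars a) -> ~ In x (vars b))
  end.

Definition assignment := var -> bool.

Fixpoint eval (s : assignment) (f : formula) : bool :=
  match f with
  | FTop => true
  | FBot => false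
  | FVar x => s x
  | FNeg x => negb (s x)
  | FOr a b => eval s a || eval s b
  | FAnd a b => eval s a && eval s b
  end.

Definition entails (phi psi : formula) : Prop :=
  forall s, eval s phi = true -> eval s psi = true.

Definition log_equiv (phi psi : formula) : Prop :=
  forall s, eval s phi = eval s psi.

Definition linear_inference (phi psi : formula) : Prop :=
  linear phi /\ linear psi /\ entails phi psi.

Fixpoint subst_const (x : var) (c : bool) (f : formula) : formula :=
  match f with
  | FTop => FTop
  | FBot => FBot
  | FVar y => if Nat.eqb x y then (if c then FTop else FBot) else FVar y
  | FNeg y => if Nat.eqb x y then (if c then FBot else FTop) else FNeg y
  | FOr a b => FOr (subst_const x c a) (subst_const x c b)
  | FAnd a b => FAnd (subst_const x c a) (subst_const x c b)
  end.

Definition trivial_at (phi psi : formula) (x : var) : Prop :=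
  entails (subst_const x true phi) (subst_const x false psi).

Definition trivial (phi psi : formula) : Prop :=
  exists x, (In x (vars phi) \/ In x (vars psi)) /\ trivial_at phi psi x.

Definition nontrivial (phi psi : formula) : Prop := ~ trivial phi psi.

Definition logically_minimal (phi psi : formula) : Prop :=
  linear_inference phi psi /\
  forall chi, linear_inference phi chi -> linear_inference chi psi ->
    log_equiv chi phi \/ log_equiv chi psi.

Inductive connective : Type := COr | CAnd.

Definition occursb (x : var) (f : formula) : bool :=
  existsb (Nat.eqb x) (vars f).

Fixpoint lcc (f : formula) (x y : var) : option connective :=
  match f with
  | FTop | FBot | FVar _ | FNeg _ => None
  | FOr a b | FAnd a b =>
      let c := match f with FAnd _ _ => CAnd | _ => COr end in
      if (occursb x a && occursb y b) || (occursb y a && occursb x b)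
      then Some c
      else if occursb x a && occursb y a then lcc a x y
      else if occursb x b && occursb y b then lcc b x y
      else None
  end.

Definition preserves_lccs (c : connective) (phi psi : formula) : Prop :=
  forall x y, x <> y -> lcc phi x y = Some c -> lcc psi x y = Some c.

Definition preserves_and_lccs := preserves_lccs CAnd.
Definition preserves_or_lccs := preserves_lccs COr.

From Stdlib Require Import List Arith Bool Lia Wf_nat.
Import ListNotations.

(* Minimality is decided by an exhaustive search. Up to equivalence, a linear
   formula is a constant, a literal, or a conjunction or disjunction of two
   constant-free linear formulas on disjoint sets of variables; the search
   enumerates the truth tables of such formulas on the variables 0 .. 8,
   pruning every subformula by the interval of truth tables it must lie in,
   and finds only the two endpoints of the inference.
   A formula chi between the endpoints that mentions a variable z outside
   0 .. 7 is handled by induction on its number of variable occurrences: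
   chi[c/z] lies between the endpoints for c = T, F, so chi is equivalent to
   an endpoint or to "if z then one endpoint else the other". Renaming z to 8
   and falsifying every other variable outside 0 .. 7 turns the latter into a
   linear formula on 0 .. 8 that still switches between the endpoints, which
   the search rules out. *)

Definition upd (s : assignment) (x : var) (c : bool) : assignment :=
  fun v => if Nat.eqb x v then c else s v.

Lemma eval_agree f s s' :
  (forall v, In v (vars f) -> s v = s' v) -> eval s f = eval s' f.
Proof.
  induction f; simpl; intros H; auto.
  - rewrite H; auto.
  - rewrite IHf1, IHf2; auto using in_or_app.
  - rewrite IHf1, IHf2; auto using in_or_app.
Qed.

Lemma eval_upd_fresh f s x c :
  ~ In x (vars f) -> eval (upd s x c) f = eval s f.
Proof.
  intros Hx; apply eval_agree; intros v Hv; unfold upd.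
  destruct (Nat.eqb_spec x v); congruence.
Qed.

Lemma eval_subst_const x c f s :
  eval s (subst_const x c f) = eval (upd s x c) f.
Proof.
  induction f; simpl; auto; try (rewrite IHf1, IHf2; auto);
    unfold upd; destruct (Nat.eqb x v), c; auto.
Qed.

Lemma vars_subst_const x c f :
  vars (subst_const x c f) = filter (fun v => negb (Nat.eqb x v)) (vars f).
Proof.
  induction f; simpl; auto; try (rewrite filter_app, IHf1, IHf2; auto);
    destruct (Nat.eqb x v), c; auto.
Qed.

Lemma linear_subst_const x c f : linear f -> linear (subst_const x c f).
Proof.
  induction f; simpl; auto; try (destruct (Nat.eqb x v), c; simpl; auto; fail);
    intros (Ha & Hb & Hab); repeat split; auto;
    rewrite !vars_subst_const; intros y Hy Hy';
    apply filter_In in Hy as [Hy _]; apply filter_In in Hy' as [Hy' _];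
    exact (Hab y Hy Hy').
Qed.

Lemma shannon_expansion x f s :
  eval s f = if s x then eval s (subst_const x true f)
             else eval s (subst_const x false f).
Proof.
  rewrite !eval_subst_const; destruct (s x) eqn:Hx; apply eval_agree;
    intros v _; unfold upd; destruct (Nat.eqb_spec x v); congruence.
Qed.

Lemma length_vars_subst_const x c f :
  In x (vars f) -> length (vars (subst_const x c f)) < length (vars f).
Proof.
  intros Hx; rewrite vars_subst_const.
  destruct (Nat.eq_dec (length (filter (fun v => negb (Nat.eqb x v)) (vars f)))
                       (length (vars f))) as [Heq | Hne].
  - apply filter_length_forallb in Heq; rewrite forallb_forall in Heq.
    specialize (Heq x Hx); rewrite Nat.eqb_refl in Heq; discriminate.
  - pose proof (filter_length_le (fun v => negb (Nat.eqb x v)) (vars f)).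
    unfold var in *; lia.
Qed.

Fixpoint rename (r : var -> option var) (f : formula) : formula :=
  match f with
  | FTop => FTop
  | FBot => FBot
  | FVar x => match r x with Some y => FVar y | None => FBot end
  | FNeg x => match r x with Some y => FNeg y | None => FTop end
  | FOr a b => FOr (rename r a) (rename r b)
  | FAnd a b => FAnd (rename r a) (rename r b)
  end.

Lemma eval_rename r f s :
  eval s (rename r f) =
  eval (fun v => match r v with Some y => s y | None => false end) f.
Proof.
  induction f; simpl; try (rewrite IHf1, IHf2); auto; destruct (r v); auto.
Qed.

Lemma in_vars_rename r f y :
  In y (vars (rename r f)) -> exists x, In x (vars f) /\ r x = Some y.
Proof.
  induction f; simpl; try tauto;
    try (destruct (r v) eqn:Hr; simpl; [intros [<- | []]; eauto | tauto]).
  all: intros [Hy | Hy]%in_app_or;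
    [destruct (IHf1 Hy) as (x & Hx & Hr) | destruct (IHf2 Hy) as (x & Hx & Hr)];
    exists x; auto using in_or_app.
Qed.

Lemma linear_rename r f :
  (forall x x' y, r x = Some y -> r x' = Some y -> x = x') ->
  linear f -> linear (rename r f).
Proof.
  intros Hr; induction f; simpl; auto; try (destruct (r v); simpl; auto; fail);
    intros (Ha & Hb & Hab); repeat split; auto;
    intros y (x & Hx & Hrx)%in_vars_rename (x' & Hx' & Hrx')%in_vars_rename;
    rewrite (Hr x x' y Hrx Hrx') in Hx; exact (Hab x' Hx Hx').
Qed.

Fixpoint const_free (f : formula) : Prop :=
  match f with
  | FTop | FBot => False
  | FVar _ | FNeg _ => True
  | FOr a b | FAnd a b => const_free a /\ const_free b
  end.

Lemma const_free_has_var f : const_free f -> exists v, In v (vars f).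
Proof.
  induction f; simpl; try tauto; eauto.
  all: intros [H1 _]; destruct (IHf1 H1) as [v Hv]; eauto using in_or_app.
Qed.

Lemma linear_normal_form f : linear f ->
  (forall s, eval s f = true) \/ (forall s, eval s f = false) \/
  exists g, const_free g /\ linear g /\ incl (vars g) (vars f) /\ log_equiv g f.
Proof.
  induction f; simpl; intros Hf; auto.
  - right; right; exists (FVar v); simpl; repeat split; auto using incl_refl.
  - right; right; exists (FNeg v); simpl; repeat split; auto using incl_refl.
  - destruct Hf as (Ha & Hb & Hab).
    destruct (IHf1 Ha) as [A | [A | (g1 & C1 & L1 & I1 & E1)]];
    destruct (IHf2 Hb) as [B | [B | (g2 & C2 & L2 & I2 & E2)]];
    try (left; intros s; rewrite ?A, ?B; auto using orb_true_r; fail).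
    + right; left; intros s; rewrite A, B; auto.
    + right; right; exists g2; repeat split; auto using incl_appr.
      intros s; simpl; rewrite A, E2; auto.
    + right; right; exists g1; repeat split; auto using incl_appl.
      intros s; simpl; rewrite B, E1, orb_false_r; auto.
    + right; right; exists (FOr g1 g2); simpl; repeat split; auto using incl_app_app.
      * intros x X1 X2; exact (Hab x (I1 x X1) (I2 x X2)).
      * intros s; simpl; rewrite E1, E2; auto.
  - destruct Hf as (Ha & Hb & Hab).
    destruct (IHf1 Ha) as [A | [A | (g1 & C1 & L1 & I1 & E1)]];
    destruct (IHf2 Hb) as [B | [B | (g2 & C2 & L2 & I2 & E2)]];
    try (right; left; intros s; rewrite ?A, ?B; auto using andb_false_r; fail).
    + left; intros s; rewrite A, B; auto.
    + right; right; exists g2; repeat split; auto using incl_appr.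
      intros s; simpl; rewrite A, E2; auto.
    + right; right; exists g1; repeat split; auto using incl_appl.
      intros s; simpl; rewrite B, E1, andb_true_r; auto.
    + right; right; exists (FAnd g1 g2); simpl; repeat split; auto using incl_app_app.
      * intros x X1 X2; exact (Hab x (I1 x X1) (I2 x X2)).
      * intros s; simpl; rewrite E1, E2; auto.
Qed.

Fixpoint dual (f : formula) : formula :=
  match f with
  | FTop => FBot
  | FBot => FTop
  | FVar x => FNeg x
  | FNeg x => FVar x
  | FOr a b => FAnd (dual a) (dual b)
  | FAnd a b => FOr (dual a) (dual b)
  end.

Lemma eval_dual s f : eval s (dual f) = negb (eval s f).
Proof.
  induction f; simpl; rewrite ?IHf1, ?IHf2, ?negb_orb, ?negb_andb, ?negb_involutive; auto.
Qed.

Lemma vars_dual f : vars (dual f) = vars f.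
Proof. induction f; simpl; congruence. Qed.

Lemma linear_dual f : linear f -> linear (dual f).
Proof. induction f; simpl; rewrite ?vars_dual; tauto. Qed.

Lemma const_free_dual f : const_free f -> const_free (dual f).
Proof. induction f; simpl; tauto. Qed.

Inductive table : Type :=
| Leaf (b : bool)
| Node (t0 t1 : table).

Definition table_eq_dec (t u : table) : {t = u} + {t <> u}.
Proof. decide equality; apply bool_dec. Defined.

Fixpoint lookup (t : table) (s : assignment) : bool :=
  match t with
  | Leaf b => b
  | Node t0 t1 =>
      if s 0 then lookup t1 (fun v => s (S v)) else lookup t0 (fun v => s (S v))
  end.

Definition scons (b : bool) (s : assignment) : assignment :=
  fun v => match v with 0 => b | S v => s v end.

Fixpoint tabulate (n : nat) (f : assignment -> bool) : table :=
  match n with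
  | 0 => Leaf (f (fun _ => false))
  | S n => Node (tabulate n (fun s => f (scons false s)))
                (tabulate n (fun s => f (scons true s)))
  end.

Lemma lookup_tabulate n f s :
  (forall s s', (forall v, v < n -> s v = s' v) -> f s = f s') ->
  lookup (tabulate n f) s = f s.
Proof.
  revert f s; induction n as [|n IH]; intros f s Hf; simpl.
  - apply Hf; lia.
  - assert (Hcons : forall b s1 s2, (forall v, v < n -> s1 v = s2 v) ->
                      f (scons b s1) = f (scons b s2))
      by (intros b s1 s2 Hs; apply Hf; intros [|v] Hv; simpl; auto with arith).
    destruct (s 0) eqn:Hs0; rewrite IH by apply Hcons;
      apply Hf; intros [|v] Hv; simpl; auto.
Qed.

Fixpoint tmap (op : bool -> bool) (t : table) : table :=
  match t with
  | Leaf b => Leaf (op b)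
  | Node t0 t1 => Node (tmap op t0) (tmap op t1)
  end.

Fixpoint tmap2 (op : bool -> bool -> bool) (t u : table) : table :=
  match t, u with
  | Leaf a, _ => tmap (op a) u
  | Node _ _, Leaf b => tmap (fun a => op a b) t
  | Node t0 t1, Node u0 u1 => Node (tmap2 op t0 u0) (tmap2 op t1 u1)
  end.

Lemma lookup_tmap op t s : lookup (tmap op t) s = op (lookup t s).
Proof. revert s; induction t; intros s; simpl; auto; destruct (s 0); auto. Qed.

Lemma lookup_tmap2 op t u s :
  lookup (tmap2 op t u) s = op (lookup t s) (lookup u s).
Proof.
  revert u s; induction t; intros u s; simpl; [apply lookup_tmap |].
  destruct u; simpl; destruct (s 0); rewrite ?lookup_tmap; auto.
Qed.

Fixpoint tproj (op : bool -> bool -> bool) (w : var) (t : table) : table :=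
  match t, w with
  | Leaf b, _ => Leaf (op b b)
  | Node t0 t1, 0 => let u := tmap2 op t0 t1 in Node u u
  | Node t0 t1, S w => Node (tproj op w t0) (tproj op w t1)
  end.

Lemma lookup_tproj op w t s :
  lookup (tproj op w t) s = op (lookup t (upd s w false)) (lookup t (upd s w true)).
Proof.
  revert w s; induction t; intros [|w] s; cbv [upd]; simpl; auto.
  - destruct (s 0); apply lookup_tmap2.
  - destruct (s 0); [exact (IHt2 w _) | exact (IHt1 w _)].
Qed.

Definition texists (W : list var) (t : table) : table := fold_right (tproj orb) t W.
Definition tforall (W : list var) (t : table) : table := fold_right (tproj andb) t W.

Lemma lookup_fold_tproj op c W t s :
  (forall a b, op a b = c -> a = c \/ b = c) ->
  lookup (fold_right (tproj op) t W) s = c ->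
  exists s', (forall v, ~ In v W -> s' v = s v) /\ lookup t s' = c.
Proof.
  intros Hop; revert s; induction W as [|w W IH]; intros s Hs; simpl in Hs.
  - exists s; auto.
  - rewrite lookup_tproj in Hs.
    assert (Hb : exists b, lookup (fold_right (tproj op) t W) (upd s w b) = c)
      by (destruct (Hop _ _ Hs); eauto).
    destruct Hb as [b Hb]; destruct (IH _ Hb) as (s' & Hs' & Ht).
    exists s'; split; auto.
    intros v Hv; rewrite Hs' by (simpl in Hv; tauto); unfold upd.
    destruct (Nat.eqb_spec w v); simpl in Hv; tauto.
Qed.

Fixpoint tall (t : table) : bool :=
  match t with
  | Leaf b => b
  | Node t0 t1 => tall t0 && tall t1
  end.

Lemma tall_spec t : tall t = true <-> forall s, lookup t s = true.
Proof.
  induction t as [b | t0 IH0 t1 IH1]; simpl.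
  - split; auto; intros H; exact (H (fun _ => false)).
  - rewrite andb_true_iff, IH0, IH1; split.
    + intros [H0 H1] s; destruct (s 0); auto.
    + intros H; split; intros s; [exact (H (scons false s)) | exact (H (scons true s))].
Qed.

Definition tle (t u : table) : bool := tall (tmap2 implb t u).

Lemma tle_spec t u :
  tle t u = true <-> forall s, lookup t s = true -> lookup u s = true.
Proof.
  unfold tle; rewrite tall_spec; split; intros H s; specialize (H s);
    rewrite lookup_tmap2 in *; destruct (lookup t s), (lookup u s); auto.
Qed.

Section Enumeration.

Variable n : nat.

Definition truth_table (f : formula) : table := tabulate n (fun s => eval s f).

Lemma lookup_truth_table f s :
  (forall v, In v (vars f) -> v < n) -> lookup (truth_table f) s = eval s f.
Proof.
  intros Hf; apply lookup_tabulate; intros s1 s2 Hs; apply eval_agree; auto.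
Qed.

Definition represents (t : table) (g : formula) : Prop :=
  forall s, lookup t s = eval s g.

Definition tbelow (t : table) (g : formula) : Prop :=
  forall s, lookup t s = true -> eval s g = true.

Definition tabove (g : formula) (t : table) : Prop :=
  forall s, eval s g = true -> lookup t s = true.

Definition compl (A : list var) : list var :=
  filter (fun v => if in_dec Nat.eq_dec v A then false else true) (seq 0 n).

Lemma notin_compl v A : In v A -> ~ In v (compl A).
Proof.
  intros HA [_ Hv]%filter_In; destruct (in_dec Nat.eq_dec v A); tauto || discriminate.
Qed.

Lemma texists_below A lo g :
  incl (vars g) A -> tbelow lo g -> tbelow (texists (compl A) lo) g.
Proof.
  intros HgA Hlo s Hs.
  destruct (lookup_fold_tproj orb true _ _ _ ltac:(intros [] []; auto) Hs)
    as (s' & Hs' & Hlo').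
  rewrite <- (Hlo s' Hlo'); apply eval_agree.
  intros v Hv; symmetry; apply Hs', notin_compl, HgA, Hv.
Qed.

Lemma tforall_above A hi g :
  incl (vars g) A -> tabove g hi -> tabove g (tforall (compl A) hi).
Proof.
  intros HgA Hhi s Hs.
  destruct (lookup (tforall (compl A) hi) s) eqn:E; auto.
  destruct (lookup_fold_tproj andb false _ _ _ ltac:(intros [] []; auto) E)
    as (s' & Hs' & Hhi').
  enough (lookup hi s' = true) by congruence.
  apply Hhi; rewrite <- Hs; apply eval_agree.
  intros v Hv; apply Hs', notin_compl, HgA, Hv.
Qed.

Fixpoint splits (U : list var) : list (list var * list var) :=
  match U with
  | [] => [([], [])]
  | u :: U => flat_map (fun '(A, B) => [(u :: A, B); (A, u :: B)]) (splits U)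
  end.

Lemma in_splits (P : var -> bool) U :
  In (filter P U, filter (fun v => negb (P v)) U) (splits U).
Proof.
  induction U as [|u U IH]; simpl; auto.
  apply in_flat_map; exists (filter P U, filter (fun v => negb (P v)) U).
  split; auto; destruct (P u); simpl; auto.
Qed.

Definition proper_splits (U : list var) : list (list var * list var) :=
  filter (fun '(A, B) => (0 <? length A) && (0 <? length B)) (splits U).

Definition conjunctions (rec : list var -> table -> table -> list table)
    (U : list var) (lo hi : table) : list table :=
  flat_map (fun '(A, B) =>
    (* if a /\ b lies in [lo, hi] with vars a in A and vars b in B, then a lies
       in [exists_(not A) lo, forall_(not A) (loB -> hi)], and symmetrically *)
    let loA := texists (compl A) lo in
    let loB := texists (compl B) lo in
    let hiA := tforall (compl A) (tmap2 orb (tmap negb loB) hi) in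
    let hiB := tforall (compl B) (tmap2 orb (tmap negb loA) hi) in
    let right := rec B loB hiB in
    flat_map (fun ta => map (tmap2 andb ta) right) (rec A loA hiA))
  (proper_splits U).

Definition in_interval (lo hi t : table) : bool := tle lo t && tle t hi.

Fixpoint enum (fuel : nat) (U : list var) (lo hi : table) : list table :=
  match fuel with
  | 0 => []
  | S k =>
      if tle lo hi then
        nodup table_eq_dec (filter (in_interval lo hi)
          (map (fun u => truth_table (FVar u)) U ++
           map (fun u => truth_table (FNeg u)) U ++
           conjunctions (enum k) U lo hi ++
           (* disjunctions: complements of conjunctions in [not hi, not lo] *)
           map (tmap negb) (conjunctions (enum k) U (tmap negb hi) (tmap negb lo))))
      else []
  end.

Definition enumerates (k : nat) (rec : list var -> table -> table -> list table) :=
  forall U lo hi g, const_free g -> linear g -> incl (vars g) U -> length U <= k ->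
  (forall u, In u U -> u < n) -> tbelow lo g -> tabove g hi ->
  exists t, In t (rec U lo hi) /\ represents t g.

Lemma conjunctions_complete k rec : enumerates k rec ->
  forall U lo hi a b, const_free a -> const_free b -> linear (FAnd a b) ->
  incl (vars (FAnd a b)) U -> length U <= S k -> (forall u, In u U -> u < n) ->
  tbelow lo (FAnd a b) -> tabove (FAnd a b) hi ->
  exists t, In t (conjunctions rec U lo hi) /\ represents t (FAnd a b).
Proof.
  intros Hrec U lo hi a b Ca Cb (La & Lb & Dab) Hinc Hlen HU Hlo Hhi.
  set (P := fun v => if in_dec Nat.eq_dec v (vars a) then true else false).
  set (A := filter P U); set (B := filter (fun v => negb (P v)) U).
  assert (IA : incl (vars a) A).
  { intros v Hv; apply filter_In; split; [apply Hinc, in_or_app; auto |].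
    unfold P; destruct (in_dec Nat.eq_dec v (vars a)); tauto. }
  assert (IB : incl (vars b) B).
  { intros v Hv; apply filter_In; split; [apply Hinc, in_or_app; auto |].
    unfold P; destruct (in_dec Nat.eq_dec v (vars a)) as [Ha |]; auto.
    destruct (Dab v Ha Hv). }
  assert (HA : 0 < length A).
  { destruct (const_free_has_var a Ca) as [v Hv].
    destruct A; [destruct (IA v Hv) | simpl; lia]. }
  assert (HB : 0 < length B).
  { destruct (const_free_has_var b Cb) as [v Hv].
    destruct B; [destruct (IB v Hv) | simpl; lia]. }
  pose proof (filter_length P U) as HAB; fold A B in HAB.
  set (loA := texists (compl A) lo); set (loB := texists (compl B) lo).
  set (hiA := tforall (compl A) (tmap2 orb (tmap negb loB) hi)).
  set (hiB := tforall (compl B) (tmap2 orb (tmap negb loA) hi)).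
  assert (HloA : tbelow loA a).
  { apply texists_below; auto; intros s Hs; apply Hlo in Hs; simpl in Hs.
    apply andb_true_iff in Hs; tauto. }
  assert (HloB : tbelow loB b).
  { apply texists_below; auto; intros s Hs; apply Hlo in Hs; simpl in Hs.
    apply andb_true_iff in Hs; tauto. }
  assert (HhiA : tabove a hiA).
  { apply tforall_above; auto; intros s Hs; rewrite lookup_tmap2, lookup_tmap.
    destruct (lookup loB s) eqn:E; simpl; auto.
    apply Hhi; simpl; rewrite Hs, HloB; auto. }
  assert (HhiB : tabove b hiB).
  { apply tforall_above; auto; intros s Hs; rewrite lookup_tmap2, lookup_tmap.
    destruct (lookup loA s) eqn:E; simpl; auto.
    apply Hhi; simpl; rewrite Hs, HloA; auto. }
  destruct (Hrec A loA hiA a) as (ta & Ta & Ra); auto.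
  { unfold var in *; lia. }
  { intros u Hu; apply filter_In in Hu; apply HU; tauto. }
  destruct (Hrec B loB hiB b) as (tb & Tb & Rb); auto.
  { unfold var in *; lia. }
  { intros u Hu; apply filter_In in Hu; apply HU; tauto. }
  exists (tmap2 andb ta tb); split.
  - apply in_flat_map; exists (A, B); split.
    + apply filter_In; split; [apply in_splits |].
      apply andb_true_iff; split; apply Nat.ltb_lt; auto.
    + apply in_flat_map; exists ta; split; auto; apply in_map; auto.
  - intros s; rewrite lookup_tmap2, Ra, Rb; auto.
Qed.

Lemma tbelow_dual g hi : tabove g hi -> tbelow (tmap negb hi) (dual g).
Proof.
  intros Hhi s; rewrite lookup_tmap, eval_dual.
  destruct (eval s g) eqn:E; auto; rewrite (Hhi s E); auto.
Qed.

Lemma tabove_dual g lo : tbelow lo g -> tabove (dual g) (tmap negb lo).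
Proof.
  intros Hlo s; rewrite lookup_tmap, eval_dual.
  destruct (lookup lo s) eqn:E; auto; rewrite (Hlo s E); auto.
Qed.

Lemma represents_dual t g : represents t (dual g) -> represents (tmap negb t) g.
Proof. intros Rt s; rewrite lookup_tmap, Rt, eval_dual, negb_involutive; auto. Qed.

Lemma enum_complete k : enumerates k (enum k).
Proof.
  induction k as [|k IH]; intros U lo hi g Cg Lg Hinc Hlen HU Hlo Hhi.
  - destruct (const_free_has_var g Cg) as [v Hv].
    destruct U; [destruct (Hinc v Hv) | simpl in Hlen; lia].
  - simpl; replace (tle lo hi) with true
      by (symmetry; apply tle_spec; auto).
    enough (exists t, In t (map (fun u => truth_table (FVar u)) U ++
             map (fun u => truth_table (FNeg u)) U ++
             conjunctions (enum k) U lo hi ++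
             map (tmap negb) (conjunctions (enum k) U (tmap negb hi) (tmap negb lo)))
             /\ represents t g) as (t & Ht & Rt).
    { exists t; split; auto; apply nodup_In, filter_In; split; auto.
      apply andb_true_iff; split; apply tle_spec; intros s; rewrite Rt; auto. }
    assert (Hlit : forall f, vars f = vars g -> represents (truth_table f) f).
    { intros f Hf s; apply lookup_truth_table; rewrite Hf; auto. }
    destruct g as [| | u | u | a b | a b]; simpl in Cg; try tauto.
    + exists (truth_table (FVar u)); split; auto.
      apply in_or_app; left; apply (in_map (fun u => truth_table (FVar u))), Hinc.
      simpl; auto.
    + exists (truth_table (FNeg u)); split; auto.
      apply in_or_app; right; apply in_or_app; left.
      apply (in_map (fun u => truth_table (FNeg u))), Hinc; simpl; auto.
    + destruct (conjunctions_complete k (enum k) IH U (tmap negb hi) (tmap negb lo)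
                  (dual a) (dual b)) as (t & Ht & Rt);
        try apply const_free_dual; try tauto.
      * exact (linear_dual (FOr a b) Lg).
      * simpl; rewrite !vars_dual; auto.
      * exact (tbelow_dual (FOr a b) hi Hhi).
      * exact (tabove_dual (FOr a b) lo Hlo).
      * exists (tmap negb t); split; [| exact (represents_dual t (FOr a b) Rt)].
        do 3 (apply in_or_app; right); apply in_map; auto.
    + destruct (conjunctions_complete k (enum k) IH U lo hi a b) as (t & Ht & Rt);
        try tauto.
      exists t; split; auto.
      do 2 (apply in_or_app; right); apply in_or_app; left; auto.
Qed.

Definition endpoints_only (phi psi : formula) : bool :=
  forallb (fun t => if in_dec table_eq_dec t [truth_table phi; truth_table psi]
                    then true else false)
    (enum n (seq 0 n) (truth_table phi) (truth_table psi)).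

Lemma minimal_of_endpoints_only phi psi :
  (forall v, In v (vars phi) -> v < n) -> (forall v, In v (vars psi) -> v < n) ->
  (exists s, eval s phi = true) -> (exists s, eval s psi = false) ->
  endpoints_only phi psi = true ->
  forall chi, linear chi -> (forall v, In v (vars chi) -> v < n) ->
  entails phi chi -> entails chi psi -> log_equiv chi phi \/ log_equiv chi psi.
Proof.
  intros Hphi Hpsi [s1 Hs1] [s2 Hs2] Hcheck chi Lchi Hchi Hphi_chi Hchi_psi.
  destruct (linear_normal_form chi Lchi) as [T | [F | (g & Cg & Lg & Ig & Eg)]].
  - rewrite (Hchi_psi s2 (T s2)) in Hs2; discriminate.
  - specialize (Hphi_chi s1 Hs1); rewrite F in Hphi_chi; discriminate.
  - destruct (enum_complete n (seq 0 n) (truth_table phi) (truth_table psi) g)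
      as (t & Ht & Rt); auto.
    + intros v Hv; apply in_seq; specialize (Hchi v (Ig v Hv)); lia.
    + rewrite length_seq; auto.
    + intros u Hu; apply in_seq in Hu; lia.
    + intros s Hs; rewrite Eg; apply Hphi_chi; rewrite <- lookup_truth_table; auto.
    + intros s Hs; rewrite lookup_truth_table; auto; apply Hchi_psi; rewrite <- Eg; auto.
    + unfold endpoints_only in Hcheck; rewrite forallb_forall in Hcheck.
      specialize (Hcheck t Ht).
      destruct (in_dec table_eq_dec t _) as [[<- | [<- | []]] | ]; try discriminate;
        [left | right]; intros s; rewrite <- Eg, <- Rt, lookup_truth_table; auto.
Qed.

End Enumeration.

Section FreshVariables.

Variables (phi psi : formula) (n : nat) (s0 : assignment).

Hypothesis phi_vars : forall v, In v (vars phi) -> v < n.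
Hypothesis psi_vars : forall v, In v (vars psi) -> v < n.
Hypothesis phi_psi : entails phi psi.
Hypothesis phi_s0 : eval s0 phi = false.
Hypothesis psi_s0 : eval s0 psi = true.
Hypothesis minimal_with_one_fresh : forall chi, linear chi ->
  (forall v, In v (vars chi) -> v <= n) -> entails phi chi -> entails chi psi ->
  log_equiv chi phi \/ log_equiv chi psi.

Let endpoint (X : formula) : Prop := X = phi \/ X = psi.

Lemma endpoint_between X : endpoint X -> entails phi X /\ entails X psi.
Proof. intros [-> | ->]; split; auto; intros s; auto. Qed.

Lemma eval_endpoint_upd X s z c :
  endpoint X -> n <= z -> eval (upd s z c) X = eval s X.
Proof.
  intros HX Hz; apply eval_upd_fresh; intros Hin.
  assert (z < n) by (destruct HX as [-> | ->]; auto); lia.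
Qed.

Lemma no_linear_switch chi z X0 X1 : n <= z -> linear chi ->
  endpoint X0 -> endpoint X1 -> eval s0 X0 <> eval s0 X1 ->
  ~ (forall s, eval s chi = if s z then eval s X1 else eval s X0).
Proof.
  intros Hz Lchi H0 H1 Hs0 Hswitch.
  set (r := fun v => if Nat.eqb v z then Some n else if v <? n then Some v else None).
  set (chi' := rename r chi).
  assert (Hchi' : forall s, eval s chi' = if s n then eval s X1 else eval s X0).
  { intros s; unfold chi'; rewrite eval_rename, Hswitch.
    assert (Hagree : forall X, endpoint X ->
              eval (fun v => match r v with Some y => s y | None => false end) X
              = eval s X).
    { intros X HX; apply eval_agree; intros v Hv.
      assert (v < n) by (destruct HX as [-> | ->]; auto).
      unfold r; destruct (Nat.eqb_spec v z); [lia |].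
      replace (v <? n) with true by (symmetry; apply Nat.ltb_lt; auto); auto. }
    unfold r at 1; rewrite Nat.eqb_refl, !Hagree; auto. }
  assert (Lchi' : linear chi').
  { apply linear_rename; auto; unfold r; intros x x' y.
    destruct (Nat.eqb_spec x z), (Nat.eqb_spec x' z),
             (Nat.ltb_spec x n), (Nat.ltb_spec x' n);
      intros Hx Hx'; try congruence; injection Hx; injection Hx'; lia. }
  assert (Vchi' : forall v, In v (vars chi') -> v <= n).
  { intros y (x & _ & Hx)%in_vars_rename; revert Hx; unfold r.
    destruct (Nat.eqb_spec x z), (Nat.ltb_spec x n); intros Hx;
      try discriminate; injection Hx; lia. }
  assert (Hnot_endpoint : forall Y, endpoint Y -> ~ log_equiv chi' Y).
  { intros Y HY E; apply Hs0.
    pose proof (E (upd s0 n false)) as E0; pose proof (E (upd s0 n true)) as E1.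
    rewrite Hchi' in E0, E1; unfold upd at 1 in E0; unfold upd at 1 in E1.
    rewrite Nat.eqb_refl, !eval_endpoint_upd in E0, E1 by auto; congruence. }
  destruct (minimal_with_one_fresh chi') as [E | E]; auto.
  - intros s Hs; rewrite Hchi'.
    destruct (s n); apply endpoint_between; auto.
  - intros s; rewrite Hchi'.
    destruct (s n); apply endpoint_between; auto.
  - apply (Hnot_endpoint phi); [left |]; auto.
  - apply (Hnot_endpoint psi); [right |]; auto.
Qed.

Lemma minimal_of_minimal_with_one_fresh chi : linear chi ->
  entails phi chi -> entails chi psi -> log_equiv chi phi \/ log_equiv chi psi.
Proof.
  induction chi as [chi IH] using (induction_ltof1 _ (fun chi => length (vars chi))).
  intros Lchi Hphi_chi Hchi_psi.
  destruct (existsb (fun v => n <=? v) (vars chi)) eqn:Hfresh.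
  - apply existsb_exists in Hfresh as (z & Hz & Hnz); apply Nat.leb_le in Hnz.
    assert (Hsub : forall c, log_equiv (subst_const z c chi) phi \/
                             log_equiv (subst_const z c chi) psi).
    { intros c; apply IH.
      - apply length_vars_subst_const; auto.
      - apply linear_subst_const; auto.
      - intros s Hs; rewrite eval_subst_const; apply Hphi_chi.
        rewrite eval_endpoint_upd; auto; left; auto.
      - intros s Hs; rewrite eval_subst_const in Hs; apply Hchi_psi in Hs.
        rewrite eval_endpoint_upd in Hs; auto; right; auto. }
    assert (Hswitch : forall X0 X1, log_equiv (subst_const z false chi) X0 ->
              log_equiv (subst_const z true chi) X1 ->
              forall s, eval s chi = if s z then eval s X1 else eval s X0).
    { intros X0 X1 E0 E1 s; rewrite (shannon_expansion z), E0, E1; auto. }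
    destruct (Hsub false) as [E0 | E0], (Hsub true) as [E1 | E1].
    + left; intros s; rewrite (Hswitch _ _ E0 E1); destruct (s z); auto.
    + destruct (no_linear_switch chi z phi psi); auto; try (left + right; auto; fail).
      congruence.
    + destruct (no_linear_switch chi z psi phi); auto; try (left + right; auto; fail).
      congruence.
    + right; intros s; rewrite (Hswitch _ _ E0 E1); destruct (s z); auto.
  - apply minimal_with_one_fresh; auto; intros v Hv.
    destruct (Nat.le_gt_cases n v) as [Hle | Hlt]; [| lia].
    enough (existsb (fun v => n <=? v) (vars chi) = true) by congruence.
    apply existsb_exists; exists v; split; auto; apply Nat.leb_le; auto.
Qed.

End FreshVariables.

Lemma not_trivial_at phi psi x s :
  eval (upd s x true) phi = true -> eval (upd s x false) psi = false ->
  ~ trivial_at phi psi x.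
Proof.
  intros Hphi Hpsi Htriv; specialize (Htriv s).
  rewrite !eval_subst_const, Hpsi in Htriv; discriminate (Htriv Hphi).
Qed.

Definition premise : formula :=
  FAnd (FOr (FAnd (FVar 0) (FVar 1)) (FAnd (FVar 2) (FVar 3)))
       (FOr (FAnd (FVar 4) (FVar 5)) (FAnd (FVar 6) (FVar 7))).

Definition conclusion : formula :=
  FOr (FAnd (FVar 0) (FVar 4))
      (FAnd (FOr (FAnd (FVar 1) (FVar 6)) (FVar 2))
            (FOr (FAnd (FVar 3) (FVar 5)) (FVar 7))).

Lemma premise_vars v : In v (vars premise) -> v < 8.
Proof. simpl; lia. Qed.

Lemma conclusion_vars v : In v (vars conclusion) -> v < 8.
Proof. simpl; lia. Qed.

Lemma premise_entails_conclusion : entails premise conclusion.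
Proof.
  intros s; simpl.
  destruct (s 0), (s 1), (s 2), (s 3), (s 4), (s 5), (s 6), (s 7); auto.
Qed.

Lemma premise_conclusion_inference : linear_inference premise conclusion.
Proof.
  split; [| split]; [simpl; repeat split; intros x; lia .. |].
  exact premise_entails_conclusion.
Qed.

Definition true_on (l : list var) : assignment := fun v => existsb (Nat.eqb v) l.

Lemma premise_conclusion_one_fresh_minimal chi : linear chi ->
  (forall v, In v (vars chi) -> v <= 8) ->
  entails premise chi -> entails chi conclusion ->
  log_equiv chi premise \/ log_equiv chi conclusion.
Proof.
  intros Lchi Hchi; apply (minimal_of_endpoints_only 9 premise conclusion).
  - intros v Hv; apply premise_vars in Hv; lia.
  - intros v Hv; apply conclusion_vars in Hv; lia.
  - exists (fun _ => true); reflexivity.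
  - exists (fun _ => false); reflexivity.
  - vm_compute; reflexivity.
  - exact Lchi.
  - intros v Hv; specialize (Hchi v Hv); lia.
Qed.

Lemma premise_conclusion_minimal : logically_minimal premise conclusion.
Proof.
  split; [exact premise_conclusion_inference |].
  intros chi (_ & Lchi & Hphi_chi) (_ & _ & Hchi_psi).
  apply (minimal_of_minimal_with_one_fresh premise conclusion 8 (true_on [0; 4]));
    auto using premise_vars, conclusion_vars, premise_entails_conclusion,
               premise_conclusion_one_fresh_minimal.
Qed.

Definition nontriviality_witness (x : var) : list var :=
  match x with
  | 0 => [1; 4; 5] | 1 => [0; 6; 7] | 2 => [3; 6; 7] | 3 => [2; 4; 5]
  | 4 => [0; 1; 5] | 5 => [2; 3; 4] | 6 => [0; 1; 7] | _ => [2; 3; 6]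
  end.

Lemma premise_conclusion_nontrivial : nontrivial premise conclusion.
Proof.
  intros (x & Hx & Htriv).
  assert (x < 8) by (destruct Hx; [apply premise_vars | apply conclusion_vars]; auto).
  revert Htriv; apply (not_trivial_at _ _ _ (true_on (nontriviality_witness x)));
    do 8 (destruct x as [|x]; [reflexivity |]); lia.
Qed.

Theorem theorem3p5 :
  exists phi psi : formula,
    linear_inference phi psi /\
    logically_minimal phi psi /\
    nontrivial phi psi /\
    ~ preserves_and_lccs phi psi /\
    ~ preserves_or_lccs phi psi.
Proof.
  exists premise, conclusion.
  split; [exact premise_conclusion_inference |].
  split; [exact premise_conclusion_minimal |].
  split; [exact premise_conclusion_nontrivial |].
  (* lcc of 0, 1 is /\ in the premise and \/ in the conclusion; of 1, 3 the reverse *)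
  split; intros Hpres.
  - specialize (Hpres 0 1 ltac:(discriminate) eq_refl); discriminate.
  - specialize (Hpres 1 3 ltac:(discriminate) eq_refl); discriminate.
Qed.
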